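(* Let $H=\Theta(2,4,4,4)$ and $G=H^2$. Then $G$ is equitably $6$-choosable.
   Context: $\Theta(l_1,\ldots,l_m)$ denotes the graph consisting of two vertices $u,w$ joined by $m$ internally disjoint paths of lengths $l_1,\ldots,l_m$. For a graph $H$, $H^2$ has vertex set $V(H)$ with two vertices adjacent iff their distance in $H$ is 1 or 2. A $k$-assignment $L$ assigns to each vertex a set of exactly $k$ colors; an equitable $L$-coloring of $G$ is a proper coloring $f$ with $f(v)\in L(v)$ such that no color is used more than $\lceil |V(G)|/k\rceil$ times; $G$ is equitably $k$-choosable if it has an equitable $L$-coloring for every $k$-assignment $L$. *)

From mathcomp Require Import all_boot.
Set Implicit Arguments. Unset Strict Implicit. Unset Printing Implicit Defensive.

(* Vertices: inl true = u, inl false = w, and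
   inr (existT i k) = the (k+1)-th vertex (k : 'I_(l_i - 1)) on the i-th path,
   i.e. path i is  u = p_0, p_1, ..., p_{l_i - 1}, p_{l_i} = w. *)
Definition theta_len (ls : seq nat) (i : 'I_(size ls)) : nat := nth 0 ls i.

Definition theta_vertex (ls : seq nat) : finType :=
  (bool + {i : 'I_(size ls) & 'I_(theta_len i).-1})%type.

Definition theta_pos (ls : seq nat) (i : 'I_(size ls)) (v : theta_vertex ls)
  : option nat :=
  match v with
  | inl true => Some 0
  | inl false => Some (theta_len i)
  | inr (existT j k) => if j == i then Some k.+1 else None
  end.

Definition theta_adj (ls : seq nat) : rel (theta_vertex ls) :=
  fun x y => [exists i : 'I_(size ls),
    match theta_pos i x, theta_pos i y with
    | Some a, Some b => (a.+1 == b) || (b.+1 == a)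
    | _, _ => false
    end].

Definition graph_square (T : finType) (e : rel T) : rel T :=
  fun x y => (x != y) && (e x y || [exists z, e x z && e z y]).

(* An equitable L-colouring is a proper colouring
   f with f v in L v, each colour used at most ceil(|V|/k) times. *)
Definition is_k_assignment (T : finType) (k : nat) (L : T -> seq nat) : Prop :=
  forall v, uniq (L v) /\ size (L v) = k.

Definition equitable_L_coloring (T : finType) (e : rel T) (k : nat)
    (L : T -> seq nat) (f : T -> nat) : Prop :=
  (forall v, f v \in L v) /\
  (forall x y, e x y -> f x != f y) /\
  (forall c : nat, #|[pred v | f v == c]| <= (#|T| + k - 1) %/ k).

Definition equitably_choosable (T : finType) (e : rel T) (k : nat) : Prop :=
  forall L : T -> seq nat, is_k_assignment k L ->
    exists f : T -> nat, equitable_L_coloring e k L f.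

(* G has 12 vertices, so an equitable colouring from 6-lists may use each
   colour at most twice.  The proof rests on two observations.

   1. (Combinatorics of H.)  The 12 vertices of H split into 6 pairs
      {v, v'} of vertices at distance at least 3 in H, i.e. non-adjacent in
      G.  This is checked by computation on an explicit numbering.

   2. (Erdos-Rubin-Taylor.)  The complete multipartite graph K_{2*m} is
      m-choosable: if the 2m vertices of a set closed under a fixed-point-free
      involution p carry lists of at least m colours, one can pick colours
      from the lists so that only p-partners share a colour.  Proof by
      induction on m: if some pair has a common colour, give it to both and
      delete it elsewhere; otherwise the lists of each pair are disjoint and
      Hall's marriage theorem yields pairwise distinct colours.

   Applying 2 to the pairing of 1 gives a proper colouring of G in which
   every colour class lies within a pair, hence has size at most 2. *)

From mathcomp Require Import all_boot finmap zify.
Set Implicit Arguments. Unset Strict Implicit. Unset Printing Implicit Defensive.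
Local Open Scope fset_scope.

Section Hall.
Variable I : finType.
Implicit Types (L : I -> {fset nat}) (A B C : {set I}) (S : {fset nat}).

Definition colors L B : {fset nat} := \bigcup_(i <- enum B) L i.

Lemma colorsP L B c : reflect (exists2 i, i \in B & c \in L i) (c \in colors L B).
Proof.
apply: (iffP (bigfcupP _ _ _ _)) => [[i /andP[]]|[i iB ci]].
  by rewrite mem_enum => iB _ ci; exists i.
by exists i; rewrite ?mem_enum ?iB.
Qed.

Lemma colorsU L B C : colors L (B :|: C) = colors L B `|` colors L C.
Proof.
apply/fsetP => c; rewrite in_fsetU; apply/colorsP/orP.
  by case=> i; rewrite in_setU => /orP[] iB ci; [left|right]; apply/colorsP; exists i.
by case=> /colorsP [i iB ci]; exists i; rewrite // in_setU iB ?orbT.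
Qed.

Lemma colorsD L S C : colors (fun i => L i `\` S) C = colors L C `\` S.
Proof.
apply/fsetP => c; rewrite in_fsetD; apply/colorsP/andP.
  by case=> i iC; rewrite in_fsetD => /andP[cS ci]; split=> //; apply/colorsP; exists i.
by case=> cS /colorsP [i iC ci]; exists i; rewrite // in_fsetD cS ci.
Qed.

Lemma colors1 L i : colors L [set i] = L i.
Proof.
apply/fsetP => c; apply/colorsP/idP; last by exists i; rewrite ?in_set1.
by case=> j; rewrite in_set1 => /eqP->.
Qed.

Definition hall L A := forall B, B \subset A -> #|B| <= #|` colors L B|.

Definition sdr L A (f : I -> nat) :=
  (forall i, i \in A -> f i \in L i) /\ {in A &, injective f}.

Lemma sdr_glue L A B S f1 f2 :
  sdr L B f1 -> (forall i, i \in B -> f1 i \in S) ->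
  sdr (fun i => L i `\` S) (A :\: B) f2 ->
  sdr L A (fun i => if i \in B then f1 i else f2 i).
Proof.
move=> [f1L f1_inj] f1S [f2L f2_inj].
have f2S i : i \in A -> i \notin B -> (f2 i \in S = false) /\ f2 i \in L i.
  by move=> iA iB; have := f2L i; rewrite in_setD iB iA in_fsetD => /(_ isT) /andP[/negbTE].
split=> [i iA|i j iA jA /=]; first by case: ifPn => iB; [exact: f1L|case: (f2S i iA iB)].
case: ifPn => iB; case: ifPn => jB.
- exact: f1_inj.
- by move=> e; have := f1S i iB; rewrite e (f2S j jA jB).1.
- by move=> e; have := f1S j jB; rewrite -e (f2S i iA iB).1.
- by apply: f2_inj; rewrite in_setD ?iB ?jB.
Qed.

Lemma hall_critical L A B : hall L A -> B \subset A ->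
  #|` colors L B| <= #|B| -> hall (fun i => L i `\` colors L B) (A :\: B).
Proof.
move=> hA BA critB C CAB; rewrite colorsD.
have BC0 : B :&: C = set0.
  apply/setP => x; rewrite in_setI in_set0; apply/negP => /andP[xB xC].
  by move/subsetP: CAB => /(_ x xC); rewrite in_setD xB.
have BCA : B :|: C \subset A by rewrite subUset BA (subset_trans CAB (subsetDl A B)).
have := hA _ BCA; rewrite cardsU BC0 cards0 subn0 colorsU.
have := cardfsUI (colors L B) (colors L C); have := cardfsID (colors L B) (colors L C).
rewrite fsetIC; lia.
Qed.

Lemma hall_noncritical L A i0 c : i0 \in A ->
  (forall B, B \proper A -> B != set0 -> #|B| < #|` colors L B|) ->
  hall (fun i => L i `\` [fset c]) (A :\ i0).
Proof.
move=> i0A surplus C CA; have [->|C0] := eqVneq C set0; first by rewrite cards0.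
have CA' : C \proper A.
  apply/properP; split; first exact: subset_trans CA (subsetDl _ _).
  by exists i0 => //; apply/negP => /(subsetP CA); rewrite in_setD1 eqxx.
have := surplus C CA' C0; rewrite colorsD.
by have := cardfsD1 c (colors L C); case: (c \in colors L C) => /=; lia.
Qed.

Theorem hall_sdr L A : hall L A -> exists f, sdr L A f.
Proof.
have [n] := ubnP #|A|; elim: n L A => // n IH L A ltAn hA.
have [->|[i0 i0A]] := set_0Vmem A.
  by exists (fun=> 0); split=> [i|i j]; rewrite in_set0.
have [critical|] := boolP [exists B : {set I},
   [&& B \proper A, B != set0 & #|` colors L B| <= #|B|]].
- have /existsP [B /and3P [BA B0 critB]] := critical.
  have sBA := proper_sub BA; have := proper_card BA; have := card_gt0 B.
  rewrite B0 => B_gt0 ltBA.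
  have [f1 f1B] : exists f, sdr L B f.
    by apply: IH; [lia|move=> C CB; apply: hA (subset_trans CB sBA)].
  have [f2 f2B] : exists f, sdr (fun i => L i `\` colors L B) (A :\: B) f.
    apply: IH; last exact: hall_critical.
    by have := cardsD A B; rewrite (setIidPr sBA); lia.
  have f1S i : i \in B -> f1 i \in colors L B.
    by move=> iB; apply/colorsP; exists i => //; apply: (proj1 f1B).
  by exists (fun i => if i \in B then f1 i else f2 i); apply: sdr_glue f1B f1S f2B.
- move=> /existsPn surplus.
  have [c ci0] : exists c, c \in L i0.
    by apply/fset0Pn; rewrite -cardfs_gt0 -(colors1 L) -(cards1 i0) hA ?sub1set.
  have [f' f'B] : exists f, sdr (fun i => L i `\` [fset c]) (A :\ i0) f.
    apply: IH; first by have := cardsD1 i0 A; rewrite i0A; lia.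
    apply: hall_noncritical => // B BA B0.
    by have := surplus B; rewrite BA B0 /= -ltnNge.
  exists (fun i => if i \in [set i0] then c else f' i); apply: sdr_glue f'B.
  + by split=> [i|i j]; rewrite !in_set1; [move/eqP->|move=> /eqP-> /eqP->].
  + by move=> i _; rewrite in_fset1.
Qed.

End Hall.

Section PairedLists.
Variables (I : finType) (p : I -> I).
Hypothesis pK : involutive p.
Hypothesis p_neq : forall i, p i != i.
Implicit Types (L : I -> {fset nat}) (A B : {set I}).

Definition p_closed A := forall i, i \in A -> p i \in A.

Definition paired_classes A (f : I -> nat) :=
  forall i j, i \in A -> j \in A -> f i = f j -> j = i \/ j = p i.

Lemma card_paired_class A f c :
  paired_classes A f -> #|[pred i | (i \in A) && (f i == c)]| <= 2.
Proof.
move=> fA; case: (pickP [pred i | (i \in A) && (f i == c)]) => [i /andP[iA /eqP fi]|none];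
  last by rewrite (eq_card0 none).
apply: (@leq_trans #|[set i; p i]|); last by rewrite cards2; case: (i != p i).
apply/subset_leq_card/subsetP => j /andP[jA /eqP fj].
by rewrite !inE; case: (fA i j iA jA (etrans fi (esym fj))) => ->; rewrite eqxx ?orbT.
Qed.

Lemma p_closed_remove A i : p_closed A -> i \in A ->
  p_closed (A :\ i :\ p i) /\ #|A :\ i :\ p i| = #|A| - 2.
Proof.
move=> clA iA; split.
  move=> j; rewrite !in_setD1 => /and3P[jpi ji jA].
  rewrite clA // andbT (inj_eq (inv_inj pK)) ji /=.
  by apply: contra jpi => /eqP <-; rewrite pK.
have := cardsD1 i A; have := cardsD1 (p i) (A :\ i).
by rewrite iA in_setD1 (negbTE (p_neq i)) clA //=; lia.
Qed.

(* If the two lists of every pair are disjoint and have at least m colours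
   each, Hall's condition holds on a p-closed set of size 2m: a subfamily
   containing a whole pair has at least 2m colours, and one containing no
   pair is disjoint from its image under p, so it has at most m members. *)
Lemma hall_disjoint_pairs m L A : #|A| = m.*2 -> p_closed A ->
  (forall i, i \in A -> m <= #|` L i|) ->
  (forall i, i \in A -> L i `&` L (p i) = fset0) -> hall L A.
Proof.
move=> cardA clA sizeL disjL B BA.
have leBA := subset_leq_card BA; have iB_A i : i \in B -> i \in A := subsetP BA i.
have [/existsP [i /andP [iB piB]]|/existsPn no_pair] :=
  boolP [exists i, (i \in B) && (p i \in B)].
  have sub : L i `|` L (p i) `<=` colors L B.
    by apply/fsubsetP => c; rewrite in_fsetU => /orP [] h; apply/colorsP; [exists i|exists (p i)].
  have := fsubset_leq_card sub; rewrite cardfsU disjL ?iB_A // cardfs0 subn0.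
  by have := sizeL i (iB_A i iB); have := sizeL (p i) (iB_A _ piB); lia.
have [->|[i iB]] := set_0Vmem B; first by rewrite cards0.
have : #|B| + #|p @: B| <= #|A|.
  have BpB0 : B :&: p @: B = set0.
    apply/setP => x; rewrite in_setI in_set0; apply/negP => /andP [xB /imsetP [y yB xy]].
    by have := no_pair y; rewrite yB -xy xB.
  have := cardsU B (p @: B); rewrite BpB0 cards0 subn0 => <-; apply: subset_leq_card.
  by rewrite subUset BA; apply/subsetP => _ /imsetP [y yB ->]; apply/clA/iB_A.
have LiB : L i `<=` colors L B by apply/fsubsetP => c ci; apply/colorsP; exists i.
rewrite card_imset; last exact: inv_inj.
by have := fsubset_leq_card LiB; have := sizeL i (iB_A i iB); lia.
Qed.

Definition pair_update i c (f : I -> nat) : I -> nat :=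
  fun j => if (j == i) || (j == p i) then c else f j.

Lemma pair_update_paired L A i c f : i \in A -> c \in L i -> c \in L (p i) ->
  (forall j, j \in A :\ i :\ p i -> f j \in L j `\` [fset c]) ->
  paired_classes (A :\ i :\ p i) f ->
  (forall j, j \in A -> pair_update i c f j \in L j) /\
  paired_classes A (pair_update i c f).
Proof.
move=> iA ci cpi fL f_paired; rewrite /pair_update.
have off_pair j : j \in A -> ~~ ((j == i) || (j == p i)) -> j \in A :\ i :\ p i.
  by move=> jA /norP[ji jpi]; rewrite !in_setD1 ji jpi.
have fLc j : j \in A -> ~~ ((j == i) || (j == p i)) -> f j \in L j /\ f j != c.
  by move=> jA jn; have := fL j (off_pair j jA jn); rewrite in_fsetD in_fset1 => /andP[].
split=> [j jA|j k jA kA].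
  by case: ifPn => [/orP[]/eqP->//|jn]; case: (fLc j jA jn).
case: ifPn => jn; case: ifPn => kn.
- by move: jn kn => /orP[]/eqP-> /orP[]/eqP->; rewrite ?pK; [left|right|right|left].
- by move=> e; case: (fLc k kA kn); rewrite -e eqxx.
- by move=> e; case: (fLc j jA jn); rewrite e eqxx.
- by apply: f_paired; apply: off_pair.
Qed.

Theorem paired_choosable m L A : #|A| = m.*2 -> p_closed A ->
  (forall i, i \in A -> m <= #|` L i|) ->
  exists f, (forall i, i \in A -> f i \in L i) /\ paired_classes A f.
Proof.
elim: m L A => [|m IH] L A cardA clA sizeL.
  move/eqP: cardA; rewrite cards_eq0 => /eqP->.
  by exists (fun=> 0); split=> [i|i j]; rewrite in_set0.
have [/existsP [i /andP [iA /fset0Pn [c]]]|/existsPn disj] :=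
  boolP [exists i, (i \in A) && (L i `&` L (p i) != fset0)].
- rewrite in_fsetI => /andP [ci cpi].
  have [clA' cardA'] := p_closed_remove clA iA.
  have [f [fL f_paired]] :
      exists f, (forall j, j \in A :\ i :\ p i -> f j \in L j `\` [fset c]) /\
                paired_classes (A :\ i :\ p i) f.
    apply: IH => //; first by rewrite cardA' cardA; lia.
    move=> j; rewrite !in_setD1 => /and3P [_ _ jA].
    by have := sizeL j jA; have := cardfsD1 c (L j); case: (c \in L j) => /=; lia.
  by exists (pair_update i c f); apply: pair_update_paired.
- have [f [fL f_inj]] : exists f, sdr L A f.
    apply/hall_sdr/(hall_disjoint_pairs cardA clA) => // i iA.
    by have := disj i; rewrite iA /= negbK => /eqP.
  by exists f; split=> // i j iA jA e; left; apply/esym/f_inj.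
Qed.

End PairedLists.

Local Notation lens := [:: 2; 4; 4; 4].
Definition TV : finType := theta_vertex lens.

Definition path0 : 'I_4 := @Ordinal 4 0 isT.
Definition path1 : 'I_4 := @Ordinal 4 1 isT.
Definition path2 : 'I_4 := @Ordinal 4 2 isT.
Definition path3 : 'I_4 := @Ordinal 4 3 isT.

Definition inner (i : 'I_4) (k : nat) (Hk : k < (@theta_len lens i).-1) : TV :=
  inr (existT _ i (Ordinal Hk)).

Definition code (v : TV) : nat :=
  match v with
  | inl true => 0
  | inl false => 1
  | inr (existT i k) => 2 + 3 * i + k
  end.

Definition codes : seq nat := [:: 0; 1; 2; 5; 6; 7; 8; 9; 10; 11; 12; 13].

Definition decode (n : nat) : TV :=
  match n with
  | 1 => inl false
  | 2 => @inner path0 0 isT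
  | 5 => @inner path1 0 isT
  | 6 => @inner path1 1 isT
  | 7 => @inner path1 2 isT
  | 8 => @inner path2 0 isT
  | 9 => @inner path2 1 isT
  | 10 => @inner path2 2 isT
  | 11 => @inner path3 0 isT
  | 12 => @inner path3 1 isT
  | 13 => @inner path3 2 isT
  | _ => inl true
  end.

Lemma decode_code v : decode (code v) = v.
Proof.
case: v => [[]|[[i Hi] [k Hk]]] //.
do 4?[case: i Hi Hk => [|i] Hi Hk]; last by [].
all: do 3?[case: k Hk => [|k] Hk]; try by [].
all: rewrite /decode /inner /=; move: Hk; rewrite [Hi](bool_irrelevance _ isT) => Hk;
  by rewrite [Hk](bool_irrelevance _ isT).
Qed.

Lemma code_in v : code v \in codes.
Proof.
case: v => [[]|[[i Hi] [k Hk]]] //.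
do 4?[case: i Hi Hk => [|i] Hi Hk]; last by [].
all: do 3?[case: k Hk => [|k] Hk]; by [].
Qed.

Lemma card_TV : #|TV| = 12.
Proof.
rewrite card_sum card_bool card_tagged (eq_map (fun i => card_ord _)).
by rewrite !enum_ordSl enum_ord0.
Qed.

(* Adjacency in H, with the quantifier over the four paths unfolded so that
   it can be evaluated. *)
Definition path_adj (x y : TV) (i : 'I_4) : bool :=
  match @theta_pos lens i x, @theta_pos lens i y with
  | Some a, Some b => (a.+1 == b) || (b.+1 == a)
  | _, _ => false
  end.

Definition adjH (x y : TV) : bool :=
  [|| path_adj x y path0, path_adj x y path1, path_adj x y path2 | path_adj x y path3].

Lemma existsI4 (P : pred 'I_4) : [exists i, P i] = [|| P path0, P path1, P path2 | P path3].
Proof.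
apply/existsP/idP => [[[i Hi]]|]; last by case/or4P => Pi; eexists; exact: Pi.
do 4?[case: i Hi => [|i] Hi]; last by [].
all: by rewrite [Hi](bool_irrelevance _ isT) => ->; rewrite ?orbT.
Qed.

Lemma theta_adjE x y : theta_adj x y = adjH x y.
Proof. exact: existsI4. Qed.

Definition far (x y : TV) : bool :=
  ~~ adjH x y && all (fun n => ~~ (adjH x (decode n) && adjH (decode n) y)) codes.

Lemma far_not_square x y : far x y -> ~~ graph_square (@theta_adj lens) x y.
Proof.
move=> /andP[not_adj /allP no_mid]; rewrite /graph_square !theta_adjE (negbTE not_adj) /=.
apply/nandP; right; apply/existsP => [[z /andP[xz zy]]].
by have := no_mid _ (code_in z); rewrite decode_code -!theta_adjE xz zy.
Qed.

(* The pairing of the vertices of H into six pairs at distance at least 3: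
   {x, b1}, {u, c1}, {w, a2}, {b2, b3}, {c2, a3}, {a1, c3}, where x is the
   middle of path 0 and a_i, b_i, c_i are the inner vertices of path i. *)
Definition mate_code (n : nat) : nat :=
  match n with
  | 2 => 6 | 6 => 2 | 0 => 7 | 7 => 0 | 1 => 8 | 8 => 1
  | 9 => 12 | 12 => 9 | 10 => 11 | 11 => 10 | 5 => 13 | 13 => 5 | _ => n
  end.

Definition mate (v : TV) : TV := decode (mate_code (code v)).

Lemma mate_table : all (fun n =>
  [&& code (decode n) == n, mate_code n \in codes, mate_code (mate_code n) == n,
      mate_code n != n & far (decode n) (decode (mate_code n))]) codes.
Proof. by vm_compute. Qed.

Lemma mate_spec v :
  [&& code (decode (mate_code (code v))) == mate_code (code v),
      mate_code (mate_code (code v)) == code v, mate_code (code v) != code v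
    & far v (mate v)].
Proof.
have /and5P[_ in_codes invol no_fix far_v] := allP mate_table _ (code_in v).
have /and5P[back _ _ _ _] := allP mate_table _ in_codes.
by rewrite back invol no_fix /mate; move: far_v; rewrite decode_code.
Qed.

Lemma mateK : involutive mate.
Proof.
move=> v; have /and4P[/eqP back /eqP invol _ _] := mate_spec v.
by rewrite /mate back invol decode_code.
Qed.

Lemma mate_neq v : mate v != v.
Proof.
have /and4P[/eqP back _ no_fix _] := mate_spec v.
by apply: contra_neq no_fix => /(congr1 code); rewrite /mate back.
Qed.

Lemma mate_far v : ~~ graph_square (@theta_adj lens) v (mate v).
Proof. by apply: far_not_square; case/and4P: (mate_spec v). Qed.

Theorem lemma3p6 :
  equitably_choosable (graph_square (@theta_adj [:: 2; 4; 4; 4])) 6.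
Proof.
move=> L kL; pose LF (v : TV) := seq_fset tt (L v).
have [|||f [fL f_paired]] := @paired_choosable _ mate mateK mate_neq 6 LF [set: TV].
- by rewrite cardsT card_TV.
- by move=> v _; rewrite in_setT.
- by move=> v _; rewrite size_seq_fset undup_id; case: (kL v) => // _ ->.
exists f; split; [|split].
- by move=> v; have := fL v (in_setT v); rewrite seq_fsetE.
- move=> x y xy; apply/eqP => fxy.
  case: (f_paired x y (in_setT x) (in_setT y) fxy) => y_eq; move: xy.
    by rewrite /graph_square y_eq eqxx.
  by rewrite y_eq (negbTE (mate_far x)).
- move=> c; rewrite card_TV; apply: leq_trans (card_paired_class c f_paired).
  by apply/subset_leq_card/subsetP => v; rewrite !inE.
Qed.
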